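(* Let $Q = I \times J \subset \mathbb{W}$ be a rectangle and let $F \colon Q \to \mathbb{W}$ be a horizontal $(M,\epsilon)$-quasi-isometric embedding. Let $w_{1} = (y_{1},t_{1}), w_{2} = (y_{2},t_{2}) \in Q$ satisfy $|y_{2}-y_{1}| > \max\{8M\epsilon, 4M^{2}\|t_{1}-t_{2}\|\}$. Then $|\pi_{1}(F(w_{2})) - \pi_{1}(F(w_{1}))| \geq \frac{|y_{2}-y_{1}|}{2M}$.
   Context: $\mathbb{W}$ is $\mathbb{R}^{2}$ with the metric $d_{\mathrm{par}}((y,t),(\xi,\tau)) = \max\{|y-\xi|,|t-\tau|^{1/2}\}$; $\pi_{1}(y,t) = y$; horizontal lines in $\mathbb{W}$ are the sets $\mathbb{R} \times \{t\}$; $\|t_{1}-t_{2}\| := \sqrt{|t_{1}-t_{2}|}$. A map $F \colon (X,d) \to (Y,d')$ is an $(M,\epsilon)$-quasi-isometric embedding if $M^{-1}d(x,y) - \epsilon \leq d'(F(x),F(y)) \leq Md(x,y) + \epsilon$ for all $x,y$. $F \colon I \times J \to \mathbb{W}$ is a horizontal $(M,\epsilon)$-quasi-isometric embedding if it is an $(M,\epsilon)$-quasi-isometric embedding w.r.t. $d_{\mathrm{par}}$ and for every $t \in J$ there is a horizontal line $\ell_{t} \subset \mathbb{W}$ with $F(I \times \{t\}) \subset \ell_{t}$. *)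

From Stdlib Require Export Reals.
Open Scope R_scope.

Definition W := (R * R)%type.

Definition d_par (w v : W) : R :=
  Rmax (Rabs (fst w - fst v)) (sqrt (Rabs (snd w - snd v))).

Definition pi1 (w : W) : R := fst w.

Definition tnorm (t1 t2 : R) : R := sqrt (Rabs (t1 - t2)).

Definition is_interval (S : R -> Prop) : Prop :=
  forall a b c, S a -> S c -> a <= b -> b <= c -> S b.

Definition rect (I J : R -> Prop) (w : W) : Prop := I (fst w) /\ J (snd w).

Definition qi_embedding_on (Q : W -> Prop) (F : W -> W) (M eps : R) : Prop :=
  forall x y, Q x -> Q y ->
    / M * d_par x y - eps <= d_par (F x) (F y) /\
    d_par (F x) (F y) <= M * d_par x y + eps.

(* Horizontal lines are R x {s}; F(I x {t}) lies in a horizontal line for each t in J *)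
Definition horizontal_qi_embedding (I J : R -> Prop) (F : W -> W) (M eps : R) : Prop :=
  qi_embedding_on (rect I J) F M eps /\
  forall t, J t -> exists s : R, forall y, I y -> snd (F (y, t)) = s.

From Stdlib Require Import Lra.

(* Horizontality moves the second coordinate of [F (y2, t2)] to that of
   [F (y1, t2)], so the quasi-isometry upper bound on the vertical segment
   from [(y1, t1)] to [(y1, t2)] controls the vertical displacement of the
   images by [M ||t1 - t2|| + eps], which the separation hypothesis makes
   less than [3 |y2 - y1| / 8M].  The lower bound gives
   [d_par (F w1) (F w2) >= |y2 - y1| / M - eps > 7 |y2 - y1| / 8M], so this
   maximum must be attained by the first coordinates. *)

Lemma tnorm_sym (t1 t2 : R) : tnorm t1 t2 = tnorm t2 t1.
Proof. unfold tnorm. now rewrite Rabs_minus_sym. Qed.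

Lemma tnorm_ge0 (t1 t2 : R) : 0 <= tnorm t1 t2.
Proof. apply sqrt_pos. Qed.

Lemma d_par_fst_le (w v : W) : Rabs (fst w - fst v) <= d_par w v.
Proof. apply Rmax_l. Qed.

Lemma d_par_tnorm_le (w v : W) : tnorm (snd w) (snd v) <= d_par w v.
Proof. apply Rmax_r. Qed.

Lemma d_par_vertical (y t1 t2 : R) : d_par (y, t1) (y, t2) = tnorm t1 t2.
Proof.
  unfold d_par; simpl. rewrite Rminus_diag, Rabs_R0.
  apply Rmax_right, tnorm_ge0.
Qed.

Lemma d_par_fst_ge (r : R) (w v : W) :
  tnorm (snd w) (snd v) < r -> r <= d_par w v -> r <= Rabs (fst w - fst v).
Proof.
  unfold d_par. fold (tnorm (snd w) (snd v)).
  apply Rmax_case; lra.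
Qed.

Lemma qi_embedding_fst_lower (Q : W -> Prop) (F : W -> W) (M eps : R) (w v : W) :
  0 < M -> qi_embedding_on Q F M eps -> Q w -> Q v ->
  / M * Rabs (fst w - fst v) - eps <= d_par (F w) (F v).
Proof.
  intros HM HQ Hw Hv.
  destruct (HQ w v Hw Hv) as [Hlow _].
  assert (0 < / M) by now apply Rinv_0_lt_compat.
  pose proof (d_par_fst_le w v).
  nra.
Qed.

Lemma horizontal_qi_tnorm_le (I J : R -> Prop) (F : W -> W) (M eps : R)
  (y1 t1 y2 t2 : R) :
  horizontal_qi_embedding I J F M eps ->
  rect I J (y1, t1) -> rect I J (y2, t2) ->
  tnorm (snd (F (y1, t1))) (snd (F (y2, t2))) <= M * tnorm t1 t2 + eps.
Proof.
  intros [HQ Hhor] [I1 J1] [I2 J2]; simpl in *.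
  destruct (Hhor t2 J2) as [s Hs].
  replace (snd (F (y2, t2))) with (snd (F (y1, t2))) by now rewrite !Hs.
  destruct (HQ (y1, t1) (y1, t2)) as [_ Hup]; try (split; assumption).
  rewrite d_par_vertical in Hup.
  eapply Rle_trans; [apply d_par_tnorm_le | exact Hup].
Qed.

Lemma separation_margins (M eps d tau : R) :
  0 < M -> 0 <= eps -> d > Rmax (8 * M * eps) (4 * M ^ 2 * tau) ->
  M * tau + eps < / M * d - eps /\ d / (2 * M) <= / M * d - eps.
Proof.
  intros HM Heps Hd.
  apply Rmax_Rlt in Hd as [Heps_d Htau_d].
  assert (0 < / M) by now apply Rinv_0_lt_compat.
  assert (0 <= M * eps) by (apply Rmult_le_pos; lra).
  split.
  - (* multiply [M^2 tau + 2 M eps < d] by [/ M] *)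
    assert (M * (M * tau + eps) + M * eps < d).
    { replace (M * (M * tau + eps) + M * eps) with (M ^ 2 * tau + 2 * (M * eps))
        by ring.
      lra. }
    replace (M * tau + eps) with (/ M * (M * (M * tau + eps))) by (field; lra).
    replace (/ M * d - eps) with (/ M * (d - M * eps)) by (field; lra).
    apply Rmult_lt_compat_l; lra.
  - replace (d / (2 * M)) with (/ M * (d / 2)) by (field; lra).
    replace (/ M * d - eps) with (/ M * (d - M * eps)) by (field; lra).
    apply Rmult_le_compat_l; lra.
Qed.

Theorem lemma3p18 (I J : R -> Prop) (F : W -> W) (M eps : R)
  (HI : is_interval I) (HJ : is_interval J)
  (HM : 1 <= M) (Heps : 0 <= eps)
  (HF : horizontal_qi_embedding I J F M eps)
  (y1 t1 y2 t2 : R)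
  (Hw1 : rect I J (y1, t1)) (Hw2 : rect I J (y2, t2))
  (Hsep : Rabs (y2 - y1) > Rmax (8 * M * eps) (4 * M ^ 2 * tnorm t1 t2)) :
  Rabs (pi1 (F (y2, t2)) - pi1 (F (y1, t1))) >= Rabs (y2 - y1) / (2 * M).
Proof.
  assert (HM0 : 0 < M) by lra.
  destruct (separation_margins M eps _ _ HM0 Heps Hsep) as [Hvert Hhalf].
  pose proof (qi_embedding_fst_lower _ _ _ _ (y2, t2) (y1, t1)
                HM0 (proj1 HF) Hw2 Hw1) as Hlow; simpl in Hlow.
  pose proof (horizontal_qi_tnorm_le I J F M eps y1 t1 y2 t2 HF Hw1 Hw2) as Htn.
  rewrite tnorm_sym in Htn.
  apply Rle_ge, (Rle_trans _ _ _ Hhalf), d_par_fst_ge; lra.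
Qed.
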